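(* Let $\operatorname{BTTB}_{n,k}(\mathbb{C})=\operatorname{Toep}_n(\mathbb{C})\circledast\operatorname{Toep}_k(\mathbb{C})$ be the space of $nk\times nk$ block-Toeplitz matrices with $n\times n$ blocks, each block a $k\times k$ Toeplitz matrix. The structure tensor of the matrix-vector product $\operatorname{BTTB}_{n,k}(\mathbb{C})\times\mathbb{C}^{nk}\to\mathbb{C}^{nk}$ has rank $(2k-1)(2n-1)$.
   Context: $\operatorname{Toep}_m(\mathbb{C})$ is the space of $m\times m$ Toeplitz matrices ($(i,j)$ entry depending only on $j-i$); $\circledast$ denotes the span of Kronecker products. Structure tensor of a bilinear map $\beta:U\times V\to W$: the unique $\mu_\beta\in U^*\otimes V^*\otimes W$ with $\beta(u,v)=\mu_\beta(u,v,\cdot)$. Rank: least number of decomposable tensors summing to the tensor. *)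

From HB Require Import structures.
From mathcomp Require Import all_boot all_order all_algebra all_field.
Set Implicit Arguments. Unset Strict Implicit. Unset Printing Implicit Defensive.
Import GRing.Theory.
Local Open Scope ring_scope.

Definition tensor_rank_le (F : fieldType) (I J K : finType)
  (t : I -> J -> K -> F) (r : nat) : Prop :=
  exists (u : 'I_r -> I -> F) (v : 'I_r -> J -> F) (w : 'I_r -> K -> F),
    forall i j l, t i j l = \sum_(s < r) u s i * v s j * w s l.

Definition tensor_rank_is (F : fieldType) (I J K : finType)
  (t : I -> J -> K -> F) (r : nat) : Prop :=
  tensor_rank_le t r /\ forall r', tensor_rank_le t r' -> (r <= r')%N.

(* Basis of Toep_n: for a : 'I_(2n-1) (standing for the diagonal offset
   d = a - (n-1)), the n x n matrix with 1 at (i,j) iff j - i = d. *)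
Definition toep_basis (F : fieldType) (n : nat) (a : 'I_(2 * n - 1)) : 'M[F]_n :=
  \matrix_(i < n, j < n) ((j + n.-1 - i)%N == a)%:R.

Definition toeplitz (F : fieldType) (n : nat) (c : 'I_(2 * n - 1) -> F) : 'M[F]_n :=
  \sum_(a < 2 * n - 1) c a *: @toep_basis F n a.

(* Kronecker product of A : n x n and B : k x k, as an (nk) x (nk) matrix
   with rows/columns indexed by 'I_n * 'I_k (pairs (i,p) <-> row i*k+p). *)
Definition kron (F : fieldType) (n k : nat) (A : 'M[F]_n) (B : 'M[F]_k)
  : 'I_n * 'I_k -> 'I_n * 'I_k -> F :=
  fun x y => A x.1 y.1 * B x.2 y.2.

(* Coordinates on BTTB_{n,k} = Toep_n circledast Toep_k (span of Kronecker products):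
   the basis kron (toep_basis a) (toep_basis b). *)
Definition bttb_index (n k : nat) : finType := ('I_(2 * n - 1) * 'I_(2 * k - 1))%type.

Definition bttb (F : fieldType) (n k : nat) (c : bttb_index n k -> F)
  : 'I_n * 'I_k -> 'I_n * 'I_k -> F :=
  fun x y => \sum_(ab : bttb_index n k)
               c ab * @kron F n k (@toep_basis F n ab.1) (@toep_basis F k ab.2) x y.

Definition bttb_mv (F : fieldType) (n k : nat) (c : bttb_index n k -> F)
  (v : 'I_n * 'I_k -> F) : 'I_n * 'I_k -> F :=
  fun x => \sum_(y : 'I_n * 'I_k) bttb c x y * v y.

(* Its structure tensor in U^* ⊗ V^* ⊗ W, in coordinates w.r.t. the basis
   above of U = BTTB_{n,k} and the standard bases of V = W = F^{nk}:
   mu(e_ab, e_y, dual(e_x)) = (beta(e_ab, e_y))_x. *)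
Definition bttb_struct (F : fieldType) (n k : nat)
  : bttb_index n k -> ('I_n * 'I_k)%type -> ('I_n * 'I_k)%type -> F :=
  fun ab y x => @bttb_mv F n k (fun ab' => (ab' == ab)%:R) (fun y' => (y' == y)%:R) x.

(* The structure tensor is the Kronecker product of two copies of the Toeplitz
   tensor [(a, y, x) |-> [y - x + n - 1 = a]].  As y - x + n - 1 lies in
   [0, 2n - 2], that condition is a congruence modulo 2n - 1, which the discrete
   Fourier transform at a primitive (2n-1)-th root of unity writes as a sum of
   2n - 1 decomposable tensors, and rank is submultiplicative under Kronecker
   products.
   Conversely, the slice at (y, x) = (a - (n-1), (n-1) - a) singles out the basis
   vector a, so the first flattening contains an identity matrix of size
   (2n-1)(2k-1), which bounds the rank from below. *)

From HB Require Import structures.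
From mathcomp Require Import all_boot all_order all_algebra all_field.
From mathcomp Require Import zify ring.
Set Implicit Arguments. Unset Strict Implicit. Unset Printing Implicit Defensive.
Import GRing.Theory.
Local Open Scope ring_scope.

Lemma sum_prim_root_ratio (F : fieldType) m (z : F) e1 e2 :
  m.-primitive_root z ->
  \sum_(s < m) z ^+ (s * e1) / z ^+ (s * e2) =
    if e1 == e2 %[mod m] then m%:R else 0.
Proof.
move=> hz; have m_gt0 := prim_order_gt0 hz.
have z_neq0 : z != 0.
  by apply: contra_eq_neq (prim_expr_order hz) => ->; rewrite expr0n gtn_eqF // eq_sym oner_eq0.
pose w := z ^+ e1 / z ^+ e2.
have -> : \sum_(s < m) z ^+ (s * e1) / z ^+ (s * e2) = \sum_(s < m) w ^+ s.
  by apply: eq_bigr => s _; rewrite exprMn exprVn -!exprM !(mulnC s).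
have w1E : (w == 1) = (e1 == e2 %[mod m]).
  rewrite -(inj_eq (mulIf (expf_neq0 e2 z_neq0))) divfK ?expf_neq0 // mul1r.
  exact: eq_prim_root_expr.
rewrite -w1E; case: eqP => [->|w_neq1].
  by under eq_bigr do rewrite expr1n; rewrite sumr_const card_ord.
have wm1 : w ^+ m = 1.
  by rewrite exprMn exprVn -!exprM !(mulnC _ m) !exprM (prim_expr_order hz) !expr1n invr1 mulr1.
have : (w - 1) * \sum_(s < m) w ^+ s == 0 by rewrite -subrX1 wm1 subrr.
by rewrite mulf_eq0 subr_eq0 => /orP[/eqP/w_neq1|/eqP].
Qed.

Lemma tensor_rank_le_sum (F : fieldType) (I J K S : finType)
    (t : I -> J -> K -> F) (u : S -> I -> F) (v : S -> J -> F) (w : S -> K -> F) :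
  (forall i j l, t i j l = \sum_(s : S) u s i * v s j * w s l) ->
  tensor_rank_le t #|S|.
Proof.
move=> tE; exists (fun s => u (enum_val s)), (fun s => v (enum_val s)),
  (fun s => w (enum_val s)) => i j l.
by rewrite tE (big_enum_val (fun s => u s i * v s j * w s l)).
Qed.

Lemma tensor_rank_le_kron (F : fieldType) (I1 J1 K1 I2 J2 K2 : finType)
    (t1 : I1 -> J1 -> K1 -> F) (t2 : I2 -> J2 -> K2 -> F) r1 r2
    (t : I1 * I2 -> J1 * J2 -> K1 * K2 -> F) :
  (forall i j l, t i j l = t1 i.1 j.1 l.1 * t2 i.2 j.2 l.2) ->
  tensor_rank_le t1 r1 -> tensor_rank_le t2 r2 -> tensor_rank_le t (r1 * r2).
Proof.
move=> tE [u1 [v1 [w1 t1E]]] [u2 [v2 [w2 t2E]]].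
have := tensor_rank_le_sum (S := ('I_r1 * 'I_r2)%type) (t := t)
  (u := fun s i => u1 s.1 i.1 * u2 s.2 i.2)
  (v := fun s j => v1 s.1 j.1 * v2 s.2 j.2) (w := fun s l => w1 s.1 l.1 * w2 s.2 l.2).
rewrite card_prod !card_ord; apply=> i j l.
rewrite tE t1E t2E big_distrlr pair_bigA; apply: eq_bigr => s _ /=.
ring.
Qed.

(* The first flattening of [t] contains an identity matrix of size #|I|. *)
Definition identity_flattening (F : fieldType) (I J K : finType)
    (t : I -> J -> K -> F) : Prop :=
  exists (f : I -> J) (g : I -> K), forall i i', t i' (f i) (g i) = (i == i')%:R.

Lemma identity_flattening_rank_ge (F : fieldType) (I J K : finType)
    (t : I -> J -> K -> F) r :
  identity_flattening t -> tensor_rank_le t r -> (#|I| <= r)%N.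
Proof.
move=> [f [g tfg]] [u [v [w tE]]].
pose A : 'M[F]_(#|I|, r) := \matrix_(i, s) u s (enum_val i).
pose B : 'M[F]_(r, #|I|) :=
  \matrix_(s, i) (v s (f (enum_val i)) * w s (g (enum_val i))).
have AB1 : A *m B = 1%:M.
  apply/matrixP => i i'; rewrite !mxE.
  under eq_bigr do rewrite !mxE mulrA.
  by rewrite -tE tfg (inj_eq enum_val_inj) eq_sym.
by rewrite -[#|I|](mxrank1 F) -AB1 mulmx_max_rank.
Qed.

Lemma identity_flattening_kron (F : fieldType) (I1 J1 K1 I2 J2 K2 : finType)
    (t1 : I1 -> J1 -> K1 -> F) (t2 : I2 -> J2 -> K2 -> F)
    (t : I1 * I2 -> J1 * J2 -> K1 * K2 -> F) :
  (forall i j l, t i j l = t1 i.1 j.1 l.1 * t2 i.2 j.2 l.2) ->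
  identity_flattening t1 -> identity_flattening t2 -> identity_flattening t.
Proof.
move=> tE [f1 [g1 t1fg]] [f2 [g2 t2fg]].
exists (fun i => (f1 i.1, f2 i.2)), (fun i => (g1 i.1, g2 i.2)) => i i'.
by rewrite tE t1fg t2fg -natrM mulnb; case: i i' => [? ?] [? ?].
Qed.

Definition toep_struct (F : fieldType) n (a : 'I_(2 * n - 1)) (y x : 'I_n) : F :=
  ((y + n.-1 - x)%N == a)%:R.

Lemma bttb_struct_kron (F : fieldType) n k ab y x :
  @bttb_struct F n k ab y x = toep_struct F ab.1 y.1 x.1 * toep_struct F ab.2 y.2 x.2.
Proof.
rewrite /bttb_struct /bttb_mv (bigD1 y) //= big1 => [|y' /negbTE ->]; last by rewrite mulr0.
rewrite addr0 eqxx mulr1 /bttb (bigD1 ab) //= big1 => [|ab' /negbTE ->]; last by rewrite mul0r.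
by rewrite addr0 eqxx mul1r /kron !mxE.
Qed.

Lemma toep_struct_modE (F : fieldType) n a (y x : 'I_n) :
  toep_struct F a y x = (y + n.-1 == a + x %[mod 2 * n - 1])%:R.
Proof.
have lt_yx : (y + n.-1 - x < 2 * n - 1)%N by have := ltn_ord y; have := ltn_ord x; lia.
have le_xy : (x <= y + n.-1)%N by have := ltn_ord x; lia.
by rewrite /toep_struct -{2}(subnK le_xy) eqn_modDr !modn_small.
Qed.

Lemma toep_struct_rank_le (F : fieldType) n (z : F) :
  (2 * n - 1).-primitive_root z -> tensor_rank_le (@toep_struct F n) (2 * n - 1).
Proof.
set m := (2 * n - 1)%N => hz.
have := tensor_rank_le_sum (S := 'I_m) (t := @toep_struct F n)
  (u := fun s a => (z ^+ (s * a))^-1 / m%:R) (v := fun s y => z ^+ (s * (y + n.-1)))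
  (w := fun s x => (z ^+ (s * x))^-1).
rewrite card_ord; apply=> a y x.
transitivity ((\sum_(s < m) z ^+ (s * (y + n.-1)) / z ^+ (s * (a + x))) / m%:R).
  rewrite toep_struct_modE sum_prim_root_ratio //.
  by case: ifP; rewrite ?mul0r // divff // (prim_root_natf_neq0 hz).
rewrite mulr_suml; apply: eq_bigr => s _.
by rewrite [(s * (a + x))%N]mulnDr exprD invfM; ring.
Qed.

Lemma toep_struct_identity_flattening (F : fieldType) n :
  identity_flattening (@toep_struct F n).
Proof.
have col_subproof (a : 'I_(2 * n - 1)) : (a - n.-1 < n)%N by have := ltn_ord a; lia.
have row_subproof (a : 'I_(2 * n - 1)) : (n.-1 - a < n)%N by have := ltn_ord a; lia.
exists (fun a => Ordinal (col_subproof a)), (fun a => Ordinal (row_subproof a)) => a a'.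
have fgE : (a - n.-1 + n.-1 - (n.-1 - a))%N = a by have := ltn_ord a; lia.
by rewrite /toep_struct /= fgE.
Qed.

Theorem mainTheorem14 (n k : nat) (hn : (0 < n)%N) (hk : (0 < k)%N) :
  tensor_rank_is (@bttb_struct algC n k) ((2 * k - 1) * (2 * n - 1))%N.
Proof.
have [zn zn_prim] := @C_prim_root_exists (2 * n - 1)%N ltac:(lia).
have [zk zk_prim] := @C_prim_root_exists (2 * k - 1)%N ltac:(lia).
split.
  rewrite mulnC; apply: (tensor_rank_le_kron (@bttb_struct_kron _ n k)).
    exact: toep_struct_rank_le zn_prim.
  exact: toep_struct_rank_le zk_prim.
move=> r /(identity_flattening_rank_ge _); rewrite card_prod !card_ord mulnC; apply.
apply: (identity_flattening_kron (@bttb_struct_kron _ n k));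
  exact: toep_struct_identity_flattening.
Qed.
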